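(* Let $l_n,R_n>0$ ($n\in\mathbb N$) satisfy $l_n,R_n\to\infty$, $l_n^2/n\to0$, $n/R_n\to0$, $e^{-\pi l_n/2}R_n\to0$, and for real $t\neq\pm n$ let $W_n(t)=\lim_{\varepsilon\downarrow0}W_n(t+i\varepsilon)$, where $W_n(z)=\exp\!\big(-l_n\pi-il_n\log\frac{z-n}{z+n}\big)$, $z\in\mathbb C_+$. Then $$\sup_n\Big|\int_{|t|>n}W_n(t)\,\frac{dt}{t}\Big|<\infty,$$ where $\int_{|t|>n}$ means $\lim_{M\to\infty}\int_{n<|t|<M}$.
   Context: $\mathbb C_+=\{\operatorname{Im}z>0\}$; $\log$ denotes the branch with imaginary part in $(0,\pi)$ on $\mathbb C_+$. Explicitly, for $|t|>n$ the boundary values are $W_n(t)=e^{-l_n\pi-il_n\log|\frac{t-n}{t+n}|}$. *)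

From Stdlib Require Import Reals.
From Coquelicot Require Import Coquelicot.
Open Scope R_scope.

Definition cexp (z : C) : C :=
  RtoC (exp (Re z)) * (cos (Im z), sin (Im z)).

(* Boundary value of W_n on the real axis for |t| > n (cf. context):
   W_n(t) = exp(-l_n pi - i l_n log|(t-n)/(t+n)|). *)
Definition Wb (lam : R) (n : nat) (t : R) : C :=
  cexp (RtoC (- (lam * PI)) - (0, lam * ln (Rabs ((t - INR n) / (t + INR n))))%R).

Definition integrand (lam : R) (n : nat) (t : R) : C := Cdiv (Wb lam n t) (RtoC t).

Definition CRInt (f : R -> C) (a b : R) : C :=
  @RInt C_R_CompleteNormedModule f a b.
Definition ex_CRInt (f : R -> C) (a b : R) : Prop :=
  @ex_RInt C_R_CompleteNormedModule f a b.

From Stdlib Require Import Reals Lra Lia.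
From Coquelicot Require Import Coquelicot.
Open Scope R_scope.

(* For |t| > n write W_n(t)/t = e^(-pi l) e^(-i l phi(t)) / t with
   phi(t) = log((t - n)/(t + n)), which is odd in t.  The real part of the
   integrand is therefore odd and cancels in the symmetric integral, while the
   imaginary part -e^(-pi l) sin(l phi(t))/t is even.  On [n, 2n] it is bounded
   by e^(-pi l)/n; for t >= 2n one has |phi(t)| <= 4n/t, so it is bounded by
   4 l n e^(-pi l)/t^2.  Hence the improper integral converges and has modulus
   at most 2 e^(-pi l) (1 + 2 l) <= 2, because 1 + 2 l <= e^(2 l) <= e^(pi l). *)

Lemma Rabs_sin_le (x : R) : Rabs (sin x) <= Rabs x.
Proof.
  destruct (MVT_gen sin 0 x cos) as [c [_ Hc]].
  - intros y _. apply is_derive_sin.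
  - intros y _. apply continuity_sin.
  - rewrite sin_0, !Rminus_0_r in Hc. rewrite Hc, Rabs_mult.
    assert (Hcos : Rabs (cos c) <= 1) by (apply Rabs_le, COS_bound).
    assert (0 <= Rabs x) by apply Rabs_pos. nra.
Qed.

Lemma ln_le_minus_1 (y : R) : 0 < y -> ln y <= y - 1.
Proof. intros Hy. generalize (exp_ineq1_le (ln y)). rewrite exp_ln by exact Hy. lra. Qed.

Lemma continuity_pt_Rmax_l (c x : R) : continuity_pt (fun t => Rmax t c) x.
Proof.
  intros eps Heps. exists eps. split; [exact Heps|].
  intros y [_ Hy]. simpl in *. unfold R_dist in *.
  unfold Rmax. destruct (Rle_dec y c), (Rle_dec x c);
  unfold Rabs in *; repeat destruct Rcase_abs; lra.
Qed.

Lemma adapted_couple_indicator (a b d K : R) : a < d < b ->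
  adapted_couple (fun t => if Rle_dec t d then K else 0) a b
    (a :: d :: b :: nil) (K :: 0 :: nil).
Proof.
  intros [Had Hdb]. unfold adapted_couple.
  rewrite Rmin_left, Rmax_right by lra.
  repeat split; simpl; try reflexivity.
  - intros [|[|i]] Hi; simpl in *; [lra | lra | lia].
  - intros [|[|i]] Hi x [Hx1 Hx2]; simpl in *; try lia;
    destruct (Rle_dec x d); lra.
Qed.

Definition indicator_StepFun (a b d K : R) (H : a < d < b) : StepFun a b :=
  mkStepFun (existT _ (a :: d :: b :: nil)%list
    (existT _ (K :: 0 :: nil)%list (adapted_couple_indicator a b d K H))).

Lemma RiemannInt_SF_indicator (a b d K : R) (H : a < d < b) :
  RiemannInt_SF (indicator_StepFun a b d K H) = K * (d - a).
Proof.
  unfold RiemannInt_SF. destruct H as [Had Hdb].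
  destruct (Rle_dec a b); [simpl; ring | lra].
Qed.

(* The oscillation of [f] near [a] is confined to [a, a + d], which costs at
   most [2 B d] in the upper step function; off it, [f] agrees with the
   continuous function [t |-> f (Rmax t (a + d))]. *)
Lemma ex_RInt_bounded_continuous_Ioc (f : R -> R) (a b B : R) : a < b ->
  (forall t, a < t <= b -> continuity_pt f t) ->
  (forall t, a <= t <= b -> Rabs (f t) <= B) -> ex_RInt f a b.
Proof.
  intros Hab Hcont Hbnd. apply ex_RInt_Reals_1. intro eps.
  assert (HB : 0 <= B) by (eapply Rle_trans; [apply Rabs_pos | apply (Hbnd a); lra]).
  assert (Heps := cond_pos eps).
  set (d := Rmin ((b - a) / 2) (eps / (4 * (B + 1)))).
  assert (Hd : 0 < d) by (apply Rmin_pos; [lra | apply Rdiv_lt_0_compat; lra]).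
  assert (Hdb : d <= (b - a) / 2) by apply Rmin_l.
  assert (Hdeps : d * (4 * (B + 1)) <= eps).
  { assert (d <= eps / (4 * (B + 1))) by apply Rmin_r.
    apply (Rmult_le_compat_r (4 * (B + 1))) in H; [|lra].
    unfold Rdiv in H. rewrite Rmult_assoc, Rinv_l, Rmult_1_r in H; lra. }
  assert (Had : a < a + d < b) by lra.
  set (g := fun t => f (Rmax t (a + d))).
  assert (Hg : forall x, a <= x <= b -> continuity_pt g x).
  { intros x Hx. apply (continuity_pt_comp (fun t => Rmax t (a + d)) f x).
    - apply continuity_pt_Rmax_l.
    - apply Hcont. unfold Rmax; destruct Rle_dec; lra. }
  assert (Heps2 : 0 < eps / 2) by lra.
  destruct (continuity_implies_RiemannInt (Rlt_le _ _ Hab) Hg (mkposreal _ Heps2))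
    as [phi [psi [Hphi Hpsi]]].
  set (h := indicator_StepFun a b (a + d) (2 * B) Had).
  exists phi, (mkStepFun (StepFun_P28 1 psi h)). split.
  - intros t Ht. rewrite Rmin_left, Rmax_right in Ht, Hphi by lra.
    specialize (Hphi t Ht). change (Rabs (f t - phi t) <= psi t + 1 * h t).
    assert (Hfg : Rabs (f t - g t) <= h t).
    { unfold g, h; simpl. destruct (Rle_dec t (a + d)).
      - rewrite Rmax_right by lra.
        generalize (Hbnd t Ht) (Hbnd (a + d) ltac:(lra)).
        unfold Rabs; repeat destruct Rcase_abs; lra.
      - rewrite Rmax_left, Rminus_diag, Rabs_R0 by lra. lra. }
    replace (f t - phi t) with ((f t - g t) + (g t - phi t)) by ring.
    eapply Rle_trans; [apply Rabs_triang | lra].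
  - rewrite StepFun_P30. unfold h. rewrite RiemannInt_SF_indicator.
    simpl in Hpsi.
    assert (2 * B * (a + d - a) < eps / 2) by nra.
    assert (0 <= 2 * B * (a + d - a)) by nra.
    unfold Rabs in *; repeat destruct Rcase_abs; lra.
Qed.

Lemma is_RInt_reflect (W : R -> R) (a b s l : R) : a <= b ->
  (forall x, a < x < b -> W (- x) = s * W x) ->
  is_RInt W a b l -> is_RInt W (- b) (- a) (s * l).
Proof.
  intros Hab Hsym HW.
  assert (Hneg := is_RInt_opp (V := R_NormedModule) _ _ _ _ (is_RInt_scal _ _ _ s _ HW)).
  assert (Hswap := is_RInt_swap (V := R_NormedModule) _ b a _ Hneg).
  rewrite opp_opp in Hswap.
  rewrite <- (Ropp_involutive b), <- (Ropp_involutive a) in Hswap at 1.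
  assert (Hopp := is_RInt_comp_opp (V := R_NormedModule) _ _ _ _ Hswap).
  eapply is_RInt_ext; [|exact Hopp]. intros x Hx.
  rewrite Rmin_left, Rmax_right in Hx by lra.
  change (- - (s * W (- x)) = W x). rewrite Ropp_involutive.
  rewrite <- (Ropp_involutive x) at 2. rewrite (Hsym (- x)) by lra. reflexivity.
Qed.

Lemma filterlim_pinfty_of_increment_bound (G : R -> R) (A K : R) : 0 < A ->
  (forall x y, A <= x <= y -> Rabs (G y - G x) <= K / x) ->
  exists J, filterlim G (Rbar_locally p_infty) (locally J).
Proof.
  intros HA Hinc.
  apply (filterlim_locally_cauchy (U := R_CompleteSpace) (F := Rbar_locally p_infty)).
  intros eps. assert (Heps := cond_pos eps).
  exists (fun x => Rmax A (K / eps) < x). split; [exists (Rmax A (K / eps)); auto|].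
  assert (Hsmall : forall x y, Rmax A (K / eps) < x <= y -> Rabs (G y - G x) < eps).
  { intros x y [Hx Hxy].
    assert (HAx : A < x) by (eapply Rle_lt_trans; [apply Rmax_l | exact Hx]).
    assert (HKx : K / eps < x) by (eapply Rle_lt_trans; [apply Rmax_r | exact Hx]).
    eapply Rle_lt_trans; [apply Hinc; lra|].
    apply Rlt_div_l; [lra|]. apply Rlt_div_l in HKx; [|lra]. lra. }
  intros u v Hu Hv. change (Rabs (G v - G u) < eps).
  destruct (Rle_lt_dec u v).
  - apply Hsmall; lra.
  - rewrite Rabs_minus_sym. apply Hsmall; lra.
Qed.

Lemma Rabs_filterlim_le {T : Type} (F : (T -> Prop) -> Prop) (G : T -> R) (J B : R) :
  ProperFilter F -> filterlim G F (locally J) -> F (fun x => Rabs (G x) <= B) ->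
  Rabs J <= B.
Proof.
  intros HF HG HB.
  apply (filterlim_le (F := F) (fun x => Rabs (G x)) (fun _ => B) (Rabs J) B HB).
  - apply (filterlim_comp _ _ _ G Rabs F (locally J) (Rbar_locally (Rabs J)) HG).
    apply (filterlim_Rabs (Finite J)).
  - apply filterlim_const.
Qed.

Definition phase (N t : R) : R := ln ((t - N) / (t + N)).

Definition re_integrand (lam N t : R) : R :=
  exp (- (lam * PI)) * cos (lam * phase N t) / t.

Definition im_integrand (lam N t : R) : R :=
  - (exp (- (lam * PI)) * sin (lam * phase N t)) / t.

Lemma ratio_pos (N t : R) : 0 <= N < Rabs t -> 0 < (t - N) / (t + N).
Proof.
  intros [HN Ht]. destruct (Rle_lt_dec 0 t).
  - rewrite Rabs_pos_eq in Ht by lra. apply Rdiv_lt_0_compat; lra.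
  - rewrite Rabs_left in Ht by lra.
    replace ((t - N) / (t + N)) with ((N - t) / (- (t + N))) by (field; lra).
    apply Rdiv_lt_0_compat; lra.
Qed.

Lemma integrand_parts (lam : R) (n : nat) (t : R) : INR n < Rabs t ->
  integrand lam n t = (re_integrand lam (INR n) t, im_integrand lam (INR n) t).
Proof.
  intros Ht. assert (Hn := pos_INR n).
  assert (Hratio := ratio_pos (INR n) t (conj Hn Ht)).
  assert (Ht0 : t <> 0) by (intros ->; rewrite Rabs_R0 in Ht; lra).
  unfold integrand, Wb, cexp, re_integrand, im_integrand, phase.
  rewrite (Rabs_pos_eq _ (Rlt_le _ _ Hratio)).
  unfold Cdiv, Cmult, Cinv, Cminus, Cplus, Copp, RtoC; simpl.
  rewrite Ropp_0, !Rplus_0_l, Rplus_0_r, cos_neg, sin_neg.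
  apply injective_projections; simpl; field; lra.
Qed.

Lemma phase_opp (N s : R) : 0 <= N < s -> phase N (- s) = - phase N s.
Proof.
  intros HNs. unfold phase. rewrite <- ln_Rinv by (apply ratio_pos; rewrite Rabs_pos_eq; lra).
  f_equal. field. lra.
Qed.

Section Integrability.

Variables lam N : R.
Hypothesis HN : 0 < N.

Lemma re_integrand_odd (s : R) : N < s -> re_integrand lam N (- s) = - re_integrand lam N s.
Proof.
  intros Hs. unfold re_integrand. rewrite phase_opp by lra.
  rewrite Ropp_mult_distr_r_reverse, cos_neg. field. lra.
Qed.

Lemma im_integrand_even (s : R) : N < s -> im_integrand lam N (- s) = im_integrand lam N s.
Proof.
  intros Hs. unfold im_integrand. rewrite phase_opp by lra.
  rewrite Ropp_mult_distr_r_reverse, sin_neg. field. lra.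
Qed.

Lemma continuity_pt_re_integrand (t : R) : N < t -> continuity_pt (re_integrand lam N) t.
Proof.
  intros Ht. assert (Hratio := ratio_pos N t ltac:(rewrite Rabs_pos_eq; lra)).
  apply continuity_pt_filterlim, (ex_derive_continuous (V := R_NormedModule)).
  unfold re_integrand, phase. auto_derive. repeat split; lra.
Qed.

Lemma continuity_pt_im_integrand (t : R) : N < t -> continuity_pt (im_integrand lam N) t.
Proof.
  intros Ht. assert (Hratio := ratio_pos N t ltac:(rewrite Rabs_pos_eq; lra)).
  apply continuity_pt_filterlim, (ex_derive_continuous (V := R_NormedModule)).
  unfold im_integrand, phase. auto_derive. repeat split; lra.
Qed.

Lemma Rabs_amplitude_div_le (y t : R) : N <= t -> Rabs y <= 1 ->
  Rabs (exp (- (lam * PI)) * y / t) <= exp (- (lam * PI)) / N.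
Proof.
  intros Ht Hy. assert (Hc := exp_pos (- (lam * PI))).
  unfold Rdiv. rewrite !Rabs_mult, Rabs_inv, (Rabs_pos_eq (exp _)), (Rabs_pos_eq t) by lra.
  assert (/ t <= / N) by (apply Rinv_le_contravar; lra).
  assert (0 < / t) by (apply Rinv_0_lt_compat; lra).
  assert (0 <= Rabs y) by apply Rabs_pos.
  rewrite Rmult_assoc. apply Rmult_le_compat_l; nra.
Qed.

Lemma Rabs_re_integrand_le (t : R) : N <= t ->
  Rabs (re_integrand lam N t) <= exp (- (lam * PI)) / N.
Proof. intros Ht. apply Rabs_amplitude_div_le; [exact Ht | apply Rabs_le, COS_bound]. Qed.

Lemma Rabs_im_integrand_le (t : R) : N <= t ->
  Rabs (im_integrand lam N t) <= exp (- (lam * PI)) / N.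
Proof.
  intros Ht. unfold im_integrand. rewrite Rdiv_opp_l, Rabs_Ropp.
  apply Rabs_amplitude_div_le; [exact Ht | apply Rabs_le, SIN_bound].
Qed.

Lemma ex_RInt_re_integrand (M : R) : N < M -> ex_RInt (re_integrand lam N) N M.
Proof.
  intros HM. apply (ex_RInt_bounded_continuous_Ioc _ _ _ (exp (- (lam * PI)) / N) HM).
  - intros t Ht. apply continuity_pt_re_integrand. lra.
  - intros t Ht. apply Rabs_re_integrand_le. lra.
Qed.

Lemma ex_RInt_im_integrand (M : R) : N < M -> ex_RInt (im_integrand lam N) N M.
Proof.
  intros HM. apply (ex_RInt_bounded_continuous_Ioc _ _ _ (exp (- (lam * PI)) / N) HM).
  - intros t Ht. apply continuity_pt_im_integrand. lra.
  - intros t Ht. apply Rabs_im_integrand_le. lra.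
Qed.

End Integrability.

Section ImproperIntegral.

Variables lam N : R.
Hypotheses (Hlam : 0 <= lam) (HN : 0 < N).

Lemma Rabs_phase_le (s : R) : 2 * N <= s -> Rabs (phase N s) <= 4 * N / s.
Proof.
  intros Hs. unfold phase.
  assert (Hratio : 0 < (s - N) / (s + N)) by (apply Rdiv_lt_0_compat; lra).
  assert (Hneg : ln ((s - N) / (s + N)) <= 0).
  { rewrite <- ln_1. apply ln_le; [exact Hratio|]. apply Rle_div_l; lra. }
  assert (Hlow : 1 - (s + N) / (s - N) <= ln ((s - N) / (s + N))).
  { assert (Hinv := ln_le_minus_1 ((s + N) / (s - N)) ltac:(apply Rdiv_lt_0_compat; lra)).
    assert (Hflip : ln ((s + N) / (s - N)) = - ln ((s - N) / (s + N))).
    { rewrite <- ln_Rinv by exact Hratio. f_equal. field. lra. }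
    lra. }
  assert (1 - (s + N) / (s - N) >= - (4 * N / s)).
  { apply Rminus_ge. replace (1 - (s + N) / (s - N) - - (4 * N / s))
      with (2 * N * (s - 2 * N) / (s * (s - N))) by (field; lra).
    apply Rle_ge, Rdiv_le_0_compat; nra. }
  rewrite Rabs_left1 by exact Hneg. lra.
Qed.

Lemma Rabs_im_integrand_tail (s : R) : 2 * N <= s ->
  Rabs (im_integrand lam N s) <= 4 * exp (- (lam * PI)) * lam * N / (s * s).
Proof.
  intros Hs. assert (Hc := exp_pos (- (lam * PI))).
  assert (Hsin : Rabs (sin (lam * phase N s)) <= lam * (4 * N / s)).
  { eapply Rle_trans; [apply Rabs_sin_le|].
    rewrite Rabs_mult, (Rabs_pos_eq lam) by exact Hlam.
    apply Rmult_le_compat_l; [exact Hlam | apply Rabs_phase_le, Hs]. }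
  unfold im_integrand. rewrite Rdiv_opp_l, Rabs_Ropp.
  unfold Rdiv. rewrite !Rabs_mult, Rabs_inv, (Rabs_pos_eq (exp _)), (Rabs_pos_eq s) by lra.
  replace (4 * exp (- (lam * PI)) * lam * N * / (s * s))
    with (exp (- (lam * PI)) * (lam * (4 * N / s)) * / s) by (field; lra).
  apply Rmult_le_compat_r; [apply Rlt_le, Rinv_0_lt_compat; lra|].
  apply Rmult_le_compat_l; lra.
Qed.

Lemma Rabs_RInt_im_integrand_tail (M1 M2 : R) : 2 * N <= M1 <= M2 ->
  Rabs (RInt (im_integrand lam N) N M2 - RInt (im_integrand lam N) N M1)
    <= 4 * exp (- (lam * PI)) * lam * N / M1.
Proof.
  intros HM. set (K := 4 * exp (- (lam * PI)) * lam * N).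
  assert (HK : 0 <= K).
  { unfold K. generalize (exp_pos (- (lam * PI))). intro. repeat apply Rmult_le_pos; lra. }
  assert (Hex : ex_RInt (im_integrand lam N) M1 M2).
  { apply (ex_RInt_Chasles_2 (V := R_CompleteNormedModule) _ N);
      [lra | apply ex_RInt_im_integrand; lra]. }
  rewrite <- (RInt_Chasles (V := R_CompleteNormedModule) _ N M1 M2)
    by first [exact Hex | apply ex_RInt_im_integrand; lra].
  change (Rabs (RInt (im_integrand lam N) N M1 + RInt (im_integrand lam N) M1 M2
    - RInt (im_integrand lam N) N M1) <= K / M1).
  rewrite Rplus_minus_l.
  assert (Hmaj : is_RInt (fun s => K / (s * s)) M1 M2 (minus (- (K / M2)) (- (K / M1)))).
  { apply (is_RInt_derive (V := R_CompleteNormedModule) (fun s => - (K / s))).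
    - intros x Hx. rewrite Rmin_left, Rmax_right in Hx by lra.
      auto_derive; [lra | field; lra].
    - intros x Hx. rewrite Rmin_left, Rmax_right in Hx by lra.
      apply (ex_derive_continuous (V := R_NormedModule)). auto_derive. nra. }
  eapply Rle_trans.
  - apply (norm_RInt_le (V := R_NormedModule) _ _ M1 M2 _ _ (proj2 HM)
      (fun x Hx => Rabs_im_integrand_tail x ltac:(lra)) (RInt_correct _ _ _ Hex) Hmaj).
  - change (minus (- (K / M2)) (- (K / M1))) with (- (K / M2) - - (K / M1)).
    assert (0 <= K / M2) by (apply Rdiv_le_0_compat; lra). lra.
Qed.

Lemma Rabs_RInt_im_integrand_head :
  Rabs (RInt (im_integrand lam N) N (2 * N)) <= exp (- (lam * PI)).
Proof.
  eapply Rle_trans.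
  - apply abs_RInt_le_const; [lra | apply ex_RInt_im_integrand; lra |].
    intros t Ht. apply Rabs_im_integrand_le; lra.
  - right. field. lra.
Qed.

Lemma im_integrand_improper : exists J,
  filterlim (fun M => RInt (im_integrand lam N) N M) (Rbar_locally p_infty) (locally J) /\
  Rabs J <= exp (- (lam * PI)) * (1 + 2 * lam).
Proof.
  destruct (filterlim_pinfty_of_increment_bound (fun M => RInt (im_integrand lam N) N M)
              (2 * N) (4 * exp (- (lam * PI)) * lam * N)) as [J HJ].
  - lra.
  - intros x y Hxy. apply Rabs_RInt_im_integrand_tail. lra.
  - exists J. split; [exact HJ|].
    apply (Rabs_filterlim_le _ _ _ _ (Rbar_locally_filter p_infty) HJ).
    exists (2 * N). intros M HM.
    replace (RInt _ N M) with (RInt (im_integrand lam N) N (2 * N)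
      + (RInt (im_integrand lam N) N M - RInt (im_integrand lam N) N (2 * N))) by ring.
    eapply Rle_trans; [apply Rabs_triang|].
    assert (Hhead := Rabs_RInt_im_integrand_head).
    assert (Htail := Rabs_RInt_im_integrand_tail (2 * N) M ltac:(lra)).
    replace (4 * exp (- (lam * PI)) * lam * N / (2 * N))
      with (exp (- (lam * PI)) * (2 * lam)) in Htail by (field; lra).
    lra.
Qed.

End ImproperIntegral.

Lemma is_RInt_C_parts (f : R -> C) (u v : R -> R) (a b lu lv : R) : a <= b ->
  (forall t, a < t < b -> f t = (u t, v t)) ->
  is_RInt u a b lu -> is_RInt v a b lv ->
  is_RInt (V := C_R_CompleteNormedModule) f a b (lu, lv).
Proof.
  intros Hab Hf Hu Hv.
  assert (Hext : forall t, Rmin a b < t < Rmax a b -> f t = (u t, v t))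
    by (rewrite Rmin_left, Rmax_right by exact Hab; exact Hf).
  apply is_RInt_fct_extend_pair.
  - eapply is_RInt_ext; [|exact Hu]. intros t Ht. now rewrite Hext.
  - eapply is_RInt_ext; [|exact Hv]. intros t Ht. now rewrite Hext.
Qed.

Lemma is_RInt_integrand (lam : R) (n : nat) (M : R) : (0 < INR n < M) ->
  is_RInt (V := C_R_CompleteNormedModule) (integrand lam n) (INR n) M
    (RInt (re_integrand lam (INR n)) (INR n) M, RInt (im_integrand lam (INR n)) (INR n) M) /\
  is_RInt (V := C_R_CompleteNormedModule) (integrand lam n) (- M) (- INR n)
    (- RInt (re_integrand lam (INR n)) (INR n) M, RInt (im_integrand lam (INR n)) (INR n) M).
Proof.
  intros [HN HM].
  assert (HU := RInt_correct _ _ _ (ex_RInt_re_integrand lam (INR n) HN M HM)).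
  assert (HV := RInt_correct _ _ _ (ex_RInt_im_integrand lam (INR n) HN M HM)).
  set (IU := RInt (re_integrand lam (INR n)) (INR n) M) in *.
  set (IV := RInt (im_integrand lam (INR n)) (INR n) M) in *.
  split; apply (is_RInt_C_parts _ (re_integrand lam (INR n)) (im_integrand lam (INR n)));
    try lra.
  - intros t Ht. apply integrand_parts. rewrite Rabs_pos_eq; lra.
  - exact HU.
  - exact HV.
  - intros t Ht. apply integrand_parts. rewrite Rabs_left; lra.
  - replace (- IU) with (-1 * IU) by ring.
    apply (is_RInt_reflect _ (INR n) M); [lra | | exact HU].
    intros x Hx. rewrite re_integrand_odd by lra. ring.
  - rewrite <- (Rmult_1_l IV).
    apply (is_RInt_reflect _ (INR n) M); [lra | | exact HV].
    intros x Hx. rewrite im_integrand_even by lra. ring.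
Qed.

Lemma exp_opp_PI_mul_bound (lam : R) : 0 <= lam -> exp (- (lam * PI)) * (1 + 2 * lam) <= 1.
Proof.
  intros Hlam. assert (HPI := PI2_1).
  assert (Hexp := exp_ineq1_le (2 * lam)).
  assert (Hdecay : exp (- (lam * PI)) * exp (2 * lam) <= 1).
  { rewrite <- exp_plus, <- exp_0. destruct (Req_dec lam 0) as [->|Hne].
    - right. f_equal. ring.
    - left. apply exp_increasing. nra. }
  generalize (exp_pos (- (lam * PI))). nra.
Qed.

Lemma scal_C_R (k x y : R) : @scal _ C_R_ModuleSpace k (x, y) = (k * x, k * y).
Proof. reflexivity. Qed.

Lemma Cmod_imag (y : R) : Cmod (0, y) = Rabs y.
Proof. unfold Cmod. simpl. rewrite <- sqrt_Rsqr_abs. f_equal. unfold Rsqr. ring. Qed.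

Lemma symmetric_integral_limit (lam : R) (n : nat) : 0 <= lam -> 0 < INR n ->
  exists I : C,
    filterlim (fun M : R => Cplus (CRInt (integrand lam n) (- M) (- INR n))
                                 (CRInt (integrand lam n) (INR n) M))
              (Rbar_locally p_infty) (locally I)
    /\ Cmod I <= 2 * (exp (- (lam * PI)) * (1 + 2 * lam)).
Proof.
  intros Hlam HN.
  destruct (im_integrand_improper lam (INR n) Hlam HN) as [J [HJ HJle]].
  exists (0, 2 * J). split.
  - apply (filterlim_ext_loc
      (fun M => @scal _ C_R_ModuleSpace (RInt (im_integrand lam (INR n)) (INR n) M) (0, 2))).
    + exists (INR n). intros M HM.
      destruct (is_RInt_integrand lam n M (conj HN HM)) as [Hright Hleft].
      unfold CRInt. rewrite (is_RInt_unique _ _ _ _ Hright), (is_RInt_unique _ _ _ _ Hleft).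
      rewrite scal_C_R. apply injective_projections; simpl; ring.
    + replace ((0, 2 * J) : C) with (@scal _ C_R_ModuleSpace J (0, 2))
        by (rewrite scal_C_R; f_equal; ring).
      apply (filterlim_comp _ _ _ _ (fun y => @scal _ C_R_ModuleSpace y (0, 2))
               _ (locally J) _ HJ).
      apply (filterlim_scal_l (V := C_R_NormedModule)).
  - rewrite Cmod_imag, Rabs_mult, (Rabs_pos_eq 2) by lra. lra.
Qed.

Theorem lemma6 (l Rn : nat -> R)
  (hpos : forall n : nat, (0 < n)%nat -> 0 < l n /\ 0 < Rn n)
  (hl : is_lim_seq l p_infty)
  (hR : is_lim_seq Rn p_infty)
  (hl2 : is_lim_seq (fun n => (l n) ^ 2 / INR n) 0)
  (hnR : is_lim_seq (fun n => INR n / Rn n) 0)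
  (hexp : is_lim_seq (fun n => exp (- (PI * l n) / 2) * Rn n) 0) :
  exists K : R, forall n : nat, (0 < n)%nat ->
    (forall M : R, INR n < M ->
        ex_CRInt (integrand (l n) n) (INR n) M /\
        ex_CRInt (integrand (l n) n) (- M) (- INR n)) /\
    exists I : C,
      filterlim (fun M : R => Cplus (CRInt (integrand (l n) n) (- M) (- INR n))
                                   (CRInt (integrand (l n) n) (INR n) M))
                (Rbar_locally p_infty) (locally I)
      /\ Cmod I <= K.
Proof.
  exists 2. intros n Hn. destruct (hpos n Hn) as [Hlam _].
  assert (HN : 0 < INR n) by (apply lt_0_INR; lia).
  split.
  - intros M HM. destruct (is_RInt_integrand (l n) n M (conj HN HM)) as [Hright Hleft].
    split; eexists; eassumption.
  - destruct (symmetric_integral_limit (l n) n (Rlt_le _ _ Hlam) HN) as [I [HI HIle]].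
    exists I. split; [exact HI|].
    generalize (exp_opp_PI_mul_bound (l n) (Rlt_le _ _ Hlam)). lra.
Qed.
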